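(* Suppose $\Xi=\{\boldsymbol{\xi}\in\mathbb{R}^m:(\boldsymbol{\xi}-\boldsymbol{\xi}_0)^{\top}\boldsymbol{W}^{-1}(\boldsymbol{\xi}-\boldsymbol{\xi}_0)\le1\}$ with $\boldsymbol{W}\succ0$, and $f_t(\boldsymbol{x},\boldsymbol{\xi})=\boldsymbol{w}_t(\boldsymbol{\xi})^{\top}\boldsymbol{x}$ for all $t\in[T]$, where each component is $w_{tj}(\boldsymbol{\xi})=\boldsymbol{\xi}^{\top}\boldsymbol{W}_{tj}\boldsymbol{\xi}+\boldsymbol{r}_{tj}^{\top}\boldsymbol{\xi}+h_{tj}$ with $\boldsymbol{W}_{tj}\succeq0$, $j\in[n]$. Set $\boldsymbol{W}_t(\boldsymbol{x})=\sum_{j=1}^nx_j\boldsymbol{W}_{tj}$, $\boldsymbol{R}_t(\boldsymbol{x})=\sum_{j=1}^nx_j\boldsymbol{r}_{tj}$, $H_t(\boldsymbol{x})=\sum_{j=1}^nx_jh_{tj}$. Let $\tilde Z_{C_2}$ be the set of $\boldsymbol{x}\in\mathbb{R}^n$ for which there exist $\alpha_t>0$, $q_{it}\ge0$, $\boldsymbol{v}_{it}\in\mathbb{R}^m$ ($i\in[N],t\in[T]$) with, for all $i,t$, $\|\boldsymbol{v}_{it}\|_*\delta+\frac1N\sum_{j=1}^Nq_{jt}\le\epsilon\alpha_t$ and $\sup_{\boldsymbol{\xi}\in\Xi}[\boldsymbol{v}_{it}^{\top}\boldsymbol{\xi}-f_t(\boldsymbol{x},\boldsymbol{\xi})]+\alpha_t-\boldsymbol{v}_{it}^{\top}\boldsymbol{\zeta}^i-q_{it}\le0$.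 Then $\tilde Z_{C_2}$ equals the set of $\boldsymbol{x}\in\mathbb{R}^n$ for which there exist $\alpha_t>0$, $q_{it}\ge0$, $\boldsymbol{v}_{it}\in\mathbb{R}^m$, $u_{it}\in\mathbb{R}$, $\nu_{it}\ge0$ such that for all $i\in[N],t\in[T]$: $$\|\boldsymbol{v}_{it}\|_*\delta+\frac1N\sum_{j=1}^Nq_{jt}\le\epsilon\alpha_t,\qquad u_{it}-H_t(\boldsymbol{x})+\alpha_t-\boldsymbol{v}_{it}^{\top}\boldsymbol{\zeta}^i\le q_{it},$$ $$\begin{bmatrix}\boldsymbol{W}_t(\boldsymbol{x})+\nu_{it}\boldsymbol{W}^{-1}&-\frac12(2\nu_{it}\boldsymbol{W}^{-1}\boldsymbol{\xi}_0+\boldsymbol{v}_{it}-\boldsymbol{R}_t(\boldsymbol{x}))\\-\frac12(2\nu_{it}\boldsymbol{W}^{-1}\boldsymbol{\xi}_0+\boldsymbol{v}_{it}-\boldsymbol{R}_t(\boldsymbol{x}))^{\top}&u_{it}+\nu_{it}\boldsymbol{\xi}_0^{\top}\boldsymbol{W}^{-1}\boldsymbol{\xi}_0-\nu_{it}\end{bmatrix}\succeq0.$$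
   Context: Setting: $\epsilon\in(0,1)$, $\delta>0$, $[T]=\{1,\dots,T\}$; $\boldsymbol{\zeta}^1,\dots,\boldsymbol{\zeta}^N\in\Xi$ given samples; $\|\cdot\|_*$ is the dual norm of a norm on $\mathbb{R}^m$; $\succeq0$ ($\succ0$) denotes positive semidefinite (definite). *)

From HB Require Import structures.
From mathcomp Require Import all_boot all_order all_algebra.
From mathcomp Require Import all_classical all_reals ereal.
Set Implicit Arguments. Unset Strict Implicit. Unset Printing Implicit Defensive.
Import Order.TTheory GRing.Theory Num.Theory.
Local Open Scope classical_set_scope.
Local Open Scope ring_scope.

Definition dotv (R : ringType) (m : nat) (u v : 'cV[R]_m) : R := (u^T *m v) 0 0.

Definition psd (R : numDomainType) (m : nat) (A : 'M[R]_m) : Prop :=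
  A^T = A /\ forall x : 'cV[R]_m, 0 <= dotv x (A *m x).
Definition pd (R : numDomainType) (m : nat) (A : 'M[R]_m) : Prop :=
  A^T = A /\ forall x : 'cV[R]_m, x != 0 -> 0 < dotv x (A *m x).

Definition is_norm (R : realType) (m : nat) (nrm : 'cV[R]_m -> R) : Prop :=
  [/\ forall x, nrm x = 0 -> x = 0,
      forall (a : R) x, nrm (a *: x) = `|a| * nrm x &
      forall x y, nrm (x + y) <= nrm x + nrm y].

Definition dual_norm (R : realType) (m : nat) (nrm : 'cV[R]_m -> R)
  (v : 'cV[R]_m) : R := sup [set dotv v x | x in [set x | nrm x <= 1]].

Definition Xi_ell (R : realType) (m : nat) (xi0 : 'cV[R]_m) (W : 'M[R]_m)
  : set 'cV[R]_m :=
  [set xi | dotv (xi - xi0) (invmx W *m (xi - xi0)) <= 1].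

Section Model.
Variables (R : realType) (m n T : nat).
Variables (Wtj : 'I_T -> 'I_n -> 'M[R]_m) (rtj : 'I_T -> 'I_n -> 'cV[R]_m)
          (htj : 'I_T -> 'I_n -> R).

Definition w_comp (t : 'I_T) (j : 'I_n) (xi : 'cV[R]_m) : R :=
  dotv xi (Wtj t j *m xi) + dotv (rtj t j) xi + htj t j.

Definition f_obj (t : 'I_T) (x : 'cV[R]_n) (xi : 'cV[R]_m) : R :=
  \sum_(j < n) w_comp t j xi * x j 0.

Definition Wt_x (t : 'I_T) (x : 'cV[R]_n) : 'M[R]_m := \sum_(j < n) x j 0 *: Wtj t j.
Definition Rt_x (t : 'I_T) (x : 'cV[R]_n) : 'cV[R]_m := \sum_(j < n) x j 0 *: rtj t j.
Definition Ht_x (t : 'I_T) (x : 'cV[R]_n) : R := \sum_(j < n) x j 0 * htj t j.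
End Model.

Section Sets.
Variables (R : realType) (m n T N : nat).
Variables (eps delta : R) (nrm : 'cV[R]_m -> R) (zeta : 'I_N -> 'cV[R]_m)
          (xi0 : 'cV[R]_m) (W : 'M[R]_m)
          (Wtj : 'I_T -> 'I_n -> 'M[R]_m) (rtj : 'I_T -> 'I_n -> 'cV[R]_m)
          (htj : 'I_T -> 'I_n -> R).

Definition Z_C2 : set 'cV[R]_n :=
  [set x | exists (alpha : 'I_T -> R) (q : 'I_N -> 'I_T -> R)
                  (v : 'I_N -> 'I_T -> 'cV[R]_m),
     (forall t, 0 < alpha t) /\ (forall i t, 0 <= q i t) /\
     forall i t,
       dual_norm nrm (v i t) * delta + N%:R^-1 * (\sum_(j < N) q j t) <= eps * alpha t
       /\ (ereal_sup [set (dotv (v i t) xi - f_obj Wtj rtj htj t x xi)%:E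
                        | xi in Xi_ell xi0 W]
           + (alpha t - dotv (v i t) (zeta i) - q i t)%:E <= 0)%E].

Definition Z_SDP : set 'cV[R]_n :=
  [set x | exists (alpha : 'I_T -> R) (q : 'I_N -> 'I_T -> R)
                  (v : 'I_N -> 'I_T -> 'cV[R]_m) (u : 'I_N -> 'I_T -> R)
                  (nu : 'I_N -> 'I_T -> R),
     (forall t, 0 < alpha t) /\ (forall i t, 0 <= q i t) /\
     (forall i t, 0 <= nu i t) /\
     forall i t,
       let b : 'cV[R]_m :=
         (2 * nu i t) *: (invmx W *m xi0) + v i t - Rt_x rtj t x in
       [/\ dual_norm nrm (v i t) * delta + N%:R^-1 * (\sum_(j < N) q j t) <= eps * alpha t,
           u i t - Ht_x htj t x + alpha t - dotv (v i t) (zeta i) <= q i t &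
           psd (block_mx (Wt_x Wtj t x + nu i t *: invmx W) (- (2%:R^-1) *: b)
                         (- (2%:R^-1) *: b^T)
                         (u i t + nu i t * dotv xi0 (invmx W *m xi0) - nu i t)%:M)]].
End Sets.

From HB Require Import structures.
From mathcomp Require Import all_boot all_order all_algebra.
From mathcomp Require Import all_classical all_reals ereal.
From mathcomp Require Import ring lra.
Import Order.TTheory GRing.Theory Num.Theory.
Local Open Scope classical_set_scope.
Local Open Scope ring_scope.
Set Implicit Arguments. Unset Strict Implicit.

(* The worst-case constraint says that the quadratic
   q(xi) = f_t(x, xi) - v^T xi - c, with c = alpha_t - v^T zeta^i - q_it, is
   nonnegative on the ellipsoid {g <= 0}, g(xi) = (xi - xi0)^T W^-1 (xi - xi0) - 1.
   As g is strictly convex and g(xi0) < 0, the S-lemma makes this equivalent to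
   q + nu g >= 0 on all of R^m for some nu >= 0, and a quadratic function is
   nonnegative everywhere iff its homogenised coefficient matrix is PSD: that is
   the LMI, with u = H_t(x) - c.
   For strictly convex g the S-lemma is elementary: on the line through y with
   g(y) > 0 and z with g(z) < 0, g has a root on each side of z, and
   interpolating q at these two roots gives q(y) (-g(z)) + q(z) g(y) >= 0.
   Hence sup_{g y > 0} -q(y)/g(y) is at most inf_{g z < 0} q(z)/(-g(z)), and
   nu = max(0, sup) works. *)

Definition quadf (R : nzRingType) (m : nat) (M : 'M[R]_m) (b : 'cV[R]_m) (c : R)
  (xi : 'cV[R]_m) : R :=
  dotv xi (M *m xi) + dotv b xi + c.

Section DotProduct.
Variables (R : comNzRingType) (m : nat).
Implicit Types (u v w : 'cV[R]_m) (M : 'M[R]_m).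

Lemma dotvC u v : dotv u v = dotv v u.
Proof. by rewrite /dotv !mxE; apply: eq_bigr => i _; rewrite !mxE mulrC. Qed.

Lemma dotvDl u v w : dotv (u + v) w = dotv u w + dotv v w.
Proof. by rewrite /dotv linearD /= mulmxDl mxE. Qed.

Lemma dotvDr u v w : dotv u (v + w) = dotv u v + dotv u w.
Proof. by rewrite dotvC dotvDl !(dotvC u). Qed.

Lemma dotvZl a u v : dotv (a *: u) v = a * dotv u v.
Proof. by rewrite /dotv linearZ /= -scalemxAl mxE. Qed.

Lemma dotvZr a u v : dotv u (a *: v) = a * dotv u v.
Proof. by rewrite dotvC dotvZl dotvC. Qed.

Lemma dotvNl u v : dotv (- u) v = - dotv u v.
Proof. by rewrite -scaleN1r dotvZl mulN1r. Qed.

Lemma dotvNr u v : dotv u (- v) = - dotv u v.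
Proof. by rewrite dotvC dotvNl dotvC. Qed.

Lemma dotvBl u v w : dotv (u - v) w = dotv u w - dotv v w.
Proof. by rewrite dotvDl dotvNl. Qed.

Lemma dotvBr u v w : dotv u (v - w) = dotv u v - dotv u w.
Proof. by rewrite dotvDr dotvNr. Qed.

Lemma dotv0l v : dotv 0 v = 0.
Proof. by rewrite -(scale0r 0) dotvZl mul0r. Qed.

Lemma dotv0r u : dotv u 0 = 0.
Proof. by rewrite dotvC dotv0l. Qed.

Lemma dotv_sumr (I : finType) u (F : I -> 'cV[R]_m) :
  dotv u (\sum_i F i) = \sum_i dotv u (F i).
Proof. exact: (big_morph (dotv u) (dotvDr u) (dotv0r u)). Qed.

Lemma dotv_suml (I : finType) (F : I -> 'cV[R]_m) v :
  dotv (\sum_i F i) v = \sum_i dotv (F i) v.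
Proof. by rewrite dotvC dotv_sumr; apply: eq_bigr => i _; rewrite dotvC. Qed.

Lemma dotv_mulmx u M v : dotv u (M *m v) = dotv (M^T *m u) v.
Proof. by rewrite /dotv trmx_mul trmxK mulmxA. Qed.

Lemma dotv_col_mx m1 (u1 v1 : 'cV[R]_m1) u2 v2 :
  dotv (col_mx u1 u2) (col_mx v1 v2) = dotv u1 v1 + dotv u2 v2.
Proof. by rewrite /dotv tr_col_mx mul_row_col mxE. Qed.

Lemma dotv11 (u v : 'cV[R]_1) : dotv u v = u 0 0 * v 0 0.
Proof. by rewrite /dotv mxE big_ord1 mxE. Qed.

Lemma quadfBl M b1 b2 c xi : quadf M (b1 - b2) c xi = quadf M b1 c xi - dotv b2 xi.
Proof. by rewrite /quadf dotvBl; ring. Qed.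

Lemma quadf_line M b c z d s :
  quadf M b c (z + s *: d) =
  dotv d (M *m d) * s ^+ 2 + (dotv z (M *m d) + dotv d (M *m z) + dotv b d) * s
  + quadf M b c z.
Proof.
rewrite /quadf mulmxDr -scalemxAr !(dotvDl, dotvDr, dotvZl, dotvZr); ring.
Qed.

End DotProduct.

Lemma quad_lead_ge0 (R : realFieldType) (a b k : R) :
  (forall s, 0 <= a * s ^+ 2 + b * s + k) -> 0 <= a.
Proof.
move=> f_ge0; rewrite leNgt; apply/negP => a_lt0.
pose t := 1 + (`|k| + 1) / - a.
have t_ge1 : 1 <= t by rewrite lerDl divr_ge0 ?addr_ge0 // oppr_ge0 ltW.
have at2 : a * t ^+ 2 = (a - `|k| - 1) * t.
  by rewrite expr2 mulrA /t; congr (_ * _); field; rewrite lt_eqF.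
have : (a - `|k| - 1) * (t - 1) <= 0.
  by rewrite mulr_le0_ge0 ?subr_ge0 //; have := normr_ge0 k; lra.
have := f_ge0 t; have := f_ge0 (- t); have := ler_norm k.
rewrite sqrrN at2 mulrN mulrBr mulr1; lra.
Qed.

Section RealQuadratics.
Variable R : rcfType.
Implicit Types a b k s : R.

Lemma quad_sign_change_roots a b k : 0 < a -> k < 0 -> 0 < a + b + k ->
  exists s1 s2, [/\ s2 < 0, 0 < s1, s1 < 1 &
    forall s, a * s ^+ 2 + b * s + k = a * ((s - s1) * (s - s2))].
Proof.
move=> a_gt0 k_lt0 abk_gt0.
pose e := Num.sqrt (b ^+ 2 - 4 * a * k).
have e2 : e ^+ 2 = b ^+ 2 - 4 * a * k by rewrite sqr_sqrtr //; nra.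
have e_gt0 : 0 < e by rewrite sqrtr_gt0; nra.
pose s1 := (- b + e) / (2 * a); pose s2 := (- b - e) / (2 * a).
have factor s : a * s ^+ 2 + b * s + k = a * ((s - s1) * (s - s2)).
  by rewrite /s1 /s2; field: e2; rewrite gt_eqF.
have s21 : s2 < s1 by rewrite ltr_pM2r ?invr_gt0 ?mulr_gt0 //; lra.
have := factor 0; have := factor 1.
rewrite !(expr0n, expr1n, mulr0, mulr1, add0r, addr0).
rewrite mulrNN => at1 at0.
have s1s2 : s1 * s2 < 0 by rewrite -(pmulr_rlt0 _ a_gt0) -at0.
have s2_lt0 : s2 < 0 by nra.
have s1_gt0 : 0 < s1 by nra.
have : 0 < (1 - s1) * (1 - s2) by rewrite -(pmulr_rgt0 _ a_gt0) -at1.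
exists s1, s2; split => //; nra.
Qed.

Lemma quad_two_point (g q : R -> R) a b k a' b' k' :
  (forall s, g s = a * s ^+ 2 + b * s + k) ->
  (forall s, q s = a' * s ^+ 2 + b' * s + k') ->
  0 < a -> g 0 < 0 -> 0 < g 1 -> (forall s, g s <= 0 -> 0 <= q s) ->
  0 <= q 1 * - g 0 + q 0 * g 1.
Proof.
move=> gE qE a_gt0 g0_lt0 g1_gt0 q_ge0.
have k_lt0 : k < 0 by move: g0_lt0; rewrite gE expr0n /= !mulr0 !add0r.
have abk_gt0 : 0 < a + b + k by move: g1_gt0; rewrite gE expr1n !mulr1.
have [s1 [s2 [s2_lt0 s1_gt0 s1_lt1 factor]]] :=
  quad_sign_change_roots a_gt0 k_lt0 abk_gt0.
have q_root s : s = s1 \/ s = s2 -> 0 <= q s.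
  move=> s_root; apply: q_ge0; rewrite gE factor.
  by case: s_root => ->; rewrite subrr ?mul0r ?mulr0.
have g0E : g 0 = a * (s1 * s2) by rewrite gE factor !sub0r mulrNN.
have g1E : g 1 = a * ((1 - s1) * (1 - s2)) by rewrite gE factor.
have interpolation : (q 1 * - (s1 * s2) + q 0 * ((1 - s1) * (1 - s2))) * (s1 - s2)
    = - s2 * (1 - s2) * q s1 + s1 * (1 - s1) * q s2.
  by rewrite !qE; ring.
have : 0 <= - s2 * (1 - s2) * q s1 + s1 * (1 - s1) * q s2.
  apply: addr_ge0; apply: mulr_ge0.
  - by nra.
  - by apply: q_root; left.
  - by nra.
  - by apply: q_root; right.
have s12 : 0 < s1 - s2 by lra.
rewrite -interpolation pmulr_lge0 // => key.
rewrite g0E g1E.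
have -> : q 1 * - (a * (s1 * s2)) + q 0 * (a * ((1 - s1) * (1 - s2)))
  = a * (q 1 * - (s1 * s2) + q 0 * ((1 - s1) * (1 - s2))) by ring.
by rewrite mulr_ge0 // ltW.
Qed.
End RealQuadratics.

Section SLemma.
Variables (R : realType) (m : nat) (P M : 'M[R]_m) (bP b : 'cV[R]_m) (cP c : R).
Hypothesis P_pos : forall d, d != 0 -> 0 < dotv d (P *m d).
Hypothesis q_ge0 : forall xi, quadf P bP cP xi <= 0 -> 0 <= quadf M b c xi.

Let g := quadf P bP cP.
Let q := quadf M b c.

Lemma S_lemma_two_point y z : 0 < g y -> g z < 0 -> - q y / g y <= q z / - g z.
Proof.
move=> gy_gt0 gz_lt0.
pose d := y - z.
have y_line : y = z + 1 *: d by rewrite scale1r addrC subrK.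
have d_neq0 : d != 0.
  by apply: contraTneq gy_gt0 => /eqP; rewrite subr_eq0 => /eqP ->; rewrite -leNgt ltW.
have := quad_two_point (quadf_line P bP cP z d) (quadf_line M b c z d) (P_pos d_neq0).
rewrite /= scale0r addr0 -y_line.
move=> /(_ gz_lt0 gy_gt0 (fun s => @q_ge0 _)) key.
rewrite ler_pdivrMr // mulrAC ler_pdivlMr ?oppr_gt0 //; rewrite /q /g; lra.
Qed.

Variable x0 : 'cV[R]_m.
Hypothesis slater : quadf P bP cP x0 < 0.

Theorem S_lemma : exists2 nu, 0 <= nu & forall xi, 0 <= q xi + nu * g xi.
Proof.
pose S := [set - q y / g y | y in [set y | 0 < g y]].
have S_ub z : g z < 0 -> ubound S (q z / - g z).
  by move=> gz_lt0 _ [y gy_gt0 <-]; apply: S_lemma_two_point.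
exists (Num.max 0 (sup S)); first by rewrite le_max lexx.
move=> xi; case: (ltgtP (g xi) 0) => [g_lt0 | g_gt0 | g0].
- have qg_ge0 : 0 <= q xi / - g xi.
    by apply: divr_ge0; [exact: q_ge0 (ltW g_lt0) | rewrite oppr_ge0 ltW].
  have : Num.max 0 (sup S) <= q xi / - g xi.
    rewrite ge_max qg_ge0 /=.
    have [->|/set0P S_ne] := eqVneq S set0; first by rewrite sup0.
    exact: ge_sup S_ne (S_ub _ g_lt0).
  rewrite ler_pdivlMr ?oppr_gt0 //; lra.
- have S_xi : S (- q xi / g xi) by exists xi.
  have S_sup : has_sup S.
    by split; [exists (- q xi / g xi) | exists (q x0 / - g x0); exact: S_ub].
  have : - q xi / g xi <= Num.max 0 (sup S) by rewrite le_max sup_upper_bound ?orbT.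
  rewrite ler_pdivrMr //; lra.
- by rewrite g0 mulr0 addr0; apply: q_ge0; change (g xi <= 0); rewrite g0.
Qed.
End SLemma.

Section BlockPsd.
Variables (R : realFieldType) (m : nat).
Implicit Types (M : 'M[R]_m) (b y : 'cV[R]_m) (k : R).

Lemma block_quad M b k y (s : 'cV[R]_1) :
  dotv (col_mx y s)
    (block_mx M (- (2%:R^-1) *: b) (- (2%:R^-1) *: b^T) k%:M *m col_mx y s)
  = dotv y (M *m y) - s 0 0 * dotv b y + s 0 0 ^+ 2 * k.
Proof.
have lower : ((- (2%:R^-1) *: b^T) *m y + k%:M *m s) 0 0
    = - (2%:R^-1) * dotv b y + k * s 0 0.
  by rewrite mxE -scalemxAl mxE mul_scalar_mx [(k *: s) 0 0]mxE.
have upper : (- (2%:R^-1) *: b) *m s = (s 0 0 * - (2%:R^-1)) *: b.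
  by rewrite [s]mx11_scalar mul_mx_scalar scalerA mxE mulr1n.
rewrite mul_block_col dotv_col_mx dotv11 lower upper dotvDr dotvZr (dotvC y b).
by field.
Qed.

Lemma psd_blockP M b k : M^T = M ->
  psd (block_mx M (- (2%:R^-1) *: b) (- (2%:R^-1) *: b^T) k%:M) <->
  forall xi, 0 <= quadf M (- b) k xi.
Proof.
move=> M_sym; split.
  case=> _ B_pos xi; have := B_pos (col_mx xi 1%:M).
  by rewrite block_quad /quadf dotvNl !mxE mulr1n mul1r expr1n mul1r.
move=> M_quad_ge0; split.
  by rewrite tr_block_mx M_sym !linearZ /= trmxK tr_scalar_mx.
move=> w; rewrite -(vsubmxK w) block_quad.
set y := usubmx w; set s := dsubmx w 0 0.
have [s0 | s_neq0] := eqVneq s 0.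
  (* nonnegativity of [t |-> quadf M (- b) k (t *: y)] forces [0 <= y^T M y] *)
  rewrite s0 mul0r subr0 expr0n /= mul0r addr0.
  apply: (@quad_lead_ge0 _ _ (- dotv b y) k) => t.
  have := M_quad_ge0 (t *: y).
  by rewrite /quadf -scalemxAr !(dotvZl, dotvZr, dotvNl); congr (_ <= _); ring.
have := M_quad_ge0 (s^-1 *: y).
rewrite /quadf -scalemxAr !(dotvZl, dotvZr, dotvNl) => homog_ge0.
have := mulr_ge0 (sqr_ge0 s) homog_ge0.
by congr (_ <= _); field.
Qed.
End BlockPsd.

Lemma pd_unitmx (R : realFieldType) (m : nat) (W : 'M[R]_m) : pd W -> W \in unitmx.
Proof.
case=> _ W_pos; rewrite -row_free_unit -kermx_eq0; apply/rowV0Pn.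
case=> v /sub_kermxP vW0; rewrite -trmx_eq0 => /W_pos.
by rewrite /dotv trmxK mulmxA vW0 mul0mx mxE ltxx.
Qed.

Lemma pd_invmx (R : realFieldType) (m : nat) (W : 'M[R]_m) : pd W -> pd (invmx W).
Proof.
move=> W_pd; have W_unit := pd_unitmx W_pd; case: W_pd => W_sym W_pos.
split; first by rewrite trmx_inv W_sym.
move=> d d_neq0; rewrite -[d in dotv d _](mulKVmx W_unit) dotvC.
apply: W_pos; apply: contraNneq d_neq0 => Wd0.
by rewrite -(mulKVmx W_unit d) Wd0 mulmx0.
Qed.

Section RobustQuadraticConstraint.
Variables (R : realType) (m : nat) (P : 'M[R]_m) (xi0 : 'cV[R]_m).
Hypotheses (P_sym : P^T = P) (P_pos : forall d, d != 0 -> 0 < dotv d (P *m d)).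

Let g := quadf P (- (2%:R *: (P *m xi0))) (dotv xi0 (P *m xi0) - 1).

Lemma ellipsoid_quadf xi : dotv (xi - xi0) (P *m (xi - xi0)) - 1 = g xi.
Proof.
rewrite /g /quadf mulmxBr !(dotvBl, dotvBr, dotvNl, dotvZl).
rewrite [dotv xi0 (P *m xi)]dotv_mulmx P_sym (dotvC (P *m xi0)); ring.
Qed.

Lemma lagrangian_quadf A r v u nu xi :
  quadf (A + nu *: P) (- ((2 * nu) *: (P *m xi0) + v - r))
    (u + nu * dotv xi0 (P *m xi0) - nu) xi
  = quadf A (r - v) u xi + nu * g xi.
Proof.
rewrite /g /quadf mulmxDl -scalemxAl.
rewrite !(dotvDl, dotvDr, dotvBl, dotvNl, dotvZl, dotvZr); ring.
Qed.

Lemma robust_quadratic_psd A r v h c : A^T = A ->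
  (forall xi, dotv (xi - xi0) (P *m (xi - xi0)) <= 1 ->
     dotv v xi - quadf A r h xi + c <= 0) <->
  exists u nu, [/\ 0 <= nu, u - h + c <= 0 &
    psd (block_mx (A + nu *: P)
      (- (2%:R^-1) *: ((2 * nu) *: (P *m xi0) + v - r))
      (- (2%:R^-1) *: ((2 * nu) *: (P *m xi0) + v - r)^T)
      (u + nu * dotv xi0 (P *m xi0) - nu)%:M)].
Proof.
move=> A_sym.
have AP_sym nu : (A + nu *: P)^T = A + nu *: P by rewrite linearD linearZ /= A_sym P_sym.
split=> [robust | [u [nu [nu_ge0 u_le /(psd_blockP _ _ (AP_sym nu)) lagr]]] xi xi_in].
  have q_ge0 xi : g xi <= 0 -> 0 <= quadf A (r - v) (h - c) xi.
    rewrite -ellipsoid_quadf subr_le0 => /robust; rewrite quadfBl /quadf; lra.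
  have slater : g xi0 < 0 by rewrite -ellipsoid_quadf subrr dotv0l sub0r ltrN10.
  have [nu nu_ge0 lagr] := S_lemma P_pos q_ge0 slater.
  exists (h - c), nu; split=> //; first lra.
  by apply/psd_blockP => // xi; rewrite lagrangian_quadf.
have := lagr xi; rewrite lagrangian_quadf quadfBl.
have : nu * g xi <= 0 by rewrite mulr_ge0_le0 // -ellipsoid_quadf subr_le0.
rewrite /quadf; lra.
Qed.
End RobustQuadraticConstraint.

Lemma ereal_supD_le0P (R : realType) (T : Type) (S : set T) (F : T -> R) (c : R) :
  (ereal_sup [set (F x)%:E | x in S] + c%:E <= 0)%E <-> forall x, S x -> F x + c <= 0.
Proof.
rewrite -leeBrDr // sub0e -EFinN.
split=> [/ereal_supP sup_le x Sx | le0]; last first.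
  by apply/ereal_supP => _ [x Sx <-]; rewrite lee_fin; have := le0 x Sx; lra.
by have := sup_le _ (ex_intro2 _ _ x Sx erefl); rewrite lee_fin; lra.
Qed.

Lemma choice2 (I J A B : Type) (Q : I -> J -> A -> B -> Prop) :
  (forall i j, exists a b, Q i j a b) ->
  exists (f : I -> J -> A) (g : I -> J -> B), forall i j, Q i j (f i j) (g i j).
Proof.
move=> ex_ab.
have /choice[h hQ] : forall ij : I * J, exists ab : A * B, Q ij.1 ij.2 ab.1 ab.2.
  by move=> [i j]; have [a [b Qab]] := ex_ab i j; exists (a, b).
by exists (fun i j => (h (i, j)).1), (fun i j => (h (i, j)).2) => i j; apply: hQ (i, j).
Qed.

Section Model.
Variables (R : realType) (m n T : nat).
Variables (Wtj : 'I_T -> 'I_n -> 'M[R]_m) (rtj : 'I_T -> 'I_n -> 'cV[R]_m)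
          (htj : 'I_T -> 'I_n -> R).

Lemma f_objE t x xi :
  f_obj Wtj rtj htj t x xi = quadf (Wt_x Wtj t x) (Rt_x rtj t x) (Ht_x htj t x) xi.
Proof.
rewrite /f_obj /quadf /Wt_x /Rt_x /Ht_x mulmx_suml dotv_sumr dotv_suml -!big_split.
by apply: eq_bigr => j _ /=; rewrite /w_comp -scalemxAl dotvZr dotvZl; ring.
Qed.

Lemma Wt_x_sym t x : (forall t j, psd (Wtj t j)) -> (Wt_x Wtj t x)^T = Wt_x Wtj t x.
Proof.
move=> Wtj_psd; rewrite /Wt_x linear_sum; apply: eq_bigr => j _.
by rewrite linearZ /=; case: (Wtj_psd t j) => ->.
Qed.

Lemma worst_case_constraint_psd (xi0 : 'cV[R]_m) (W : 'M[R]_m) t x v c :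
  pd W -> (forall t j, psd (Wtj t j)) ->
  (ereal_sup [set (dotv v xi - f_obj Wtj rtj htj t x xi)%:E | xi in Xi_ell xi0 W]
     + c%:E <= 0)%E <->
  exists u nu, [/\ 0 <= nu, u - Ht_x htj t x + c <= 0 &
    psd (block_mx (Wt_x Wtj t x + nu *: invmx W)
      (- (2%:R^-1) *: ((2 * nu) *: (invmx W *m xi0) + v - Rt_x rtj t x))
      (- (2%:R^-1) *: ((2 * nu) *: (invmx W *m xi0) + v - Rt_x rtj t x)^T)
      (u + nu * dotv xi0 (invmx W *m xi0) - nu)%:M)].
Proof.
move=> /pd_invmx[P_sym P_pos] Wtj_psd.
have Wt_sym := Wt_x_sym t x Wtj_psd.
rewrite ereal_supD_le0P -(robust_quadratic_psd xi0 P_sym P_pos _ _ _ _ Wt_sym).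
by split=> robust xi /robust; rewrite f_objE.
Qed.
End Model.

Theorem proposition4 (R : realType) (m n T N : nat) (eps delta : R)
  (nrm : 'cV[R]_m -> R) (zeta : 'I_N -> 'cV[R]_m)
  (xi0 : 'cV[R]_m) (W : 'M[R]_m)
  (Wtj : 'I_T -> 'I_n -> 'M[R]_m) (rtj : 'I_T -> 'I_n -> 'cV[R]_m)
  (htj : 'I_T -> 'I_n -> R) :
  0 < eps < 1 -> 0 < delta -> is_norm nrm ->
  pd W -> (forall t j, psd (Wtj t j)) ->
  Z_C2 eps delta nrm zeta xi0 W Wtj rtj htj =
  Z_SDP eps delta nrm zeta xi0 W Wtj rtj htj.
Proof.
(* The reformulation is exact for every eps, delta and nrm. *)
move=> _ _ _ W_pd Wtj_psd.
have robust t x v c := worst_case_constraint_psd rtj htj xi0 t x v c W_pd Wtj_psd.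
apply/seteqP; split=> x [alpha [q [v]]].
- move=> [alpha_gt0 [q_ge0 cons]].
  have [u [nu sdp]] := choice2 (fun i t => (robust _ _ _ _).1 (cons i t).2).
  exists alpha, q, v, u, nu; do 2 split=> //.
  split=> [i t | i t /=]; first by case: (sdp i t).
  have [_ u_le psd_it] := sdp i t; split=> //; [exact: (cons i t).1 | lra].
- move=> [u [nu [alpha_gt0 [q_ge0 [nu_ge0 sdp]]]]].
  exists alpha, q, v; do 2 split=> //; move=> i t.
  have [norm_le u_le psd_it] := sdp i t; split=> //.
  by apply/robust; exists (u i t), (nu i t); split=> //; lra.
Qed.
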